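(* Let $(\mathcal{I},G,S)$ be an optimization problem class and let $(\mathcal{Q},H)$ be an oracle for $\mathcal{I}$. Suppose $\epsilon\ge 0$ and $\mathcal{A}$ is an $\epsilon$-approximation algorithm for $(\mathcal{I},G,S)$ using $(\mathcal{Q},H)$. For each $I\in\mathcal{I}$ let $Q(I)\subseteq\mathcal{Q}$ be the set of queries posed by $\mathcal{A}$ when processing instance $I$. Then $$\bigcap_{I'\in V(I,Q(I))} S(I',\epsilon)\neq\emptyset\qquad\text{for all } I\in\mathcal{I}.$$
   Context: An optimization problem class is a triple $(\mathcal{I},G,S)$: a set $\mathcal{I}$ of instances, a set $G$ of possible solutions, and a solution operator $S:\mathcal{I}\times\mathbb{R}_+\to 2^G\cup\{INFEAS\}\cup\{UNBND\}$ such that $S(I,0)\neq\emptyset$ for all $I$; $S(I,\epsilon_1)\subseteq S(I,\epsilon_2)$ whenever $0\le\epsilon_1<\epsilon_2$; if $INFEAS\in S(I,\epsilon)$ (resp. $UNBND\in S(I,\epsilon)$) then $S(I,\epsilon)=\{INFEAS\}$ (resp. $\{UNBND\}$); and if $UNBND\in S(I,0)$ then $S(I,\epsilon)=\{UNBND\}$ for all $\epsilon\ge0$. $S(I,\epsilon)$ is interpreted as the set of $\epsilon$-approximate solutions of $I$. An oracle for $\mathcal{I}$ is a pair $(\mathcal{Q},H)$ where each query $q\in\mathcal{Q}$ is a map $q:\mathcal{I}\to H$; $q(I)$ is the answer to $q$ on $I$. An $\epsilon$-approximation algorithm for $(\mathcal{I},G,S)$ using $(\mathcal{Q},H)$ is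 an oracle Turing machine (a deterministic Turing machine that may adaptively pose queries $q\in\mathcal{Q}$ and use the answers) that starts with the empty string as input and, for every $I\in\mathcal{I}$, halts with an element of $S(I,\epsilon)$ when every query $q$ it poses is answered with $q(I)$. For a subset $Q\subseteq\mathcal{Q}$ and $I\in\mathcal{I}$, $V(I,Q)=\{I'\in\mathcal{I}: q(I')=q(I)\ \forall q\in Q\}$. *)

From Stdlib Require Import Reals List.
Import ListNotations.
Open Scope R_scope.
Set Implicit Arguments.

Inductive outcome (G : Type) : Type :=
| Sol : G -> outcome G
| INFEAS : outcome G
| UNBND : outcome G.
Arguments INFEAS {G}.
Arguments UNBND {G}.

(* An optimization problem class (I, G, S).  S I eps is the set of
   eps-approximate answers, viewed as a predicate on outcomes; it is only
   meaningful for eps >= 0. *)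
Record problem_class (Inst G : Type) : Type := {
  S : Inst -> R -> outcome G -> Prop;
  S_nonempty0 : forall I, exists x, S I 0 x;
  S_mono : forall I e1 e2 x, 0 <= e1 -> e1 < e2 -> S I e1 x -> S I e2 x;
  S_infeas : forall I e, 0 <= e -> S I e INFEAS -> forall x, S I e x <-> x = INFEAS;
  S_unbnd : forall I e, 0 <= e -> S I e UNBND -> forall x, S I e x <-> x = UNBND;
  S_unbnd0 : forall I, S I 0 UNBND -> forall e, 0 <= e -> forall x, S I e x <-> x = UNBND
}.

Record oracle (Inst : Type) : Type := {
  query : Type;
  answer : Type;
  ask : query -> Inst -> answer
}.

Inductive action (Qy G : Type) : Type :=
| Ask : Qy -> action Qy G
| Halt : outcome G -> action Qy G.

(* A deterministic oracle algorithm, determined by its next action as a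
   function of the sequence of oracle answers received so far
   (starting from the empty input). *)
Definition algorithm {Inst : Type} (O : oracle Inst) (G : Type) : Type :=
  list (answer O) -> action (query O) G.

Fixpoint run {Inst G : Type} {O : oracle Inst} (A : algorithm O G)
    (n : nat) (h : list (answer O)) (I : Inst)
    : option (list (query O) * outcome G) :=
  match n with
  | Datatypes.O => None
  | Datatypes.S n' =>
      match A h with
      | Halt _ o => Some ([], o)
      | Ask _ q =>
          match run A n' (h ++ [ask O q I]) I with
          | Some (qs, o) => Some (q :: qs, o)
          | None => None
          end
      end
  end.

Definition halts_with {Inst G : Type} {O : oracle Inst} (A : algorithm O G)
    (I : Inst) (qs : list (query O)) (o : outcome G) : Prop :=
  exists n, run A n [] I = Some (qs, o).

Definition eps_approx_algorithm {Inst G : Type} (P : problem_class Inst G)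
    {O : oracle Inst} (eps : R) (A : algorithm O G) : Prop :=
  forall I, exists qs o, halts_with A I qs o /\ S P I eps o.

Definition queries_posed {Inst G : Type} {O : oracle Inst} (A : algorithm O G)
    (I : Inst) : query O -> Prop :=
  fun q => exists qs o, halts_with A I qs o /\ In q qs.

Definition V {Inst : Type} {O : oracle Inst} (I : Inst) (Q : query O -> Prop)
    : Inst -> Prop :=
  fun I' => forall q, Q q -> ask O q I' = ask O q I.

(* A deterministic oracle algorithm sees an instance only through the answers
   to the queries it poses.  Every I' in V(I, Q(I)) answers the queries of
   Q(I) as I does, so the run on I' replays the run on I and halts with the
   same output x; as A is an eps-approximation algorithm, x lies in S(I', eps). *)
From Stdlib Require Import Reals List.
Import ListNotations.
Open Scope R_scope.

Section Runs.

Context {Inst G : Type} {O : oracle Inst} {A : algorithm O G}.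

Lemma run_agree {I I' : Inst} {n h qs o} :
  run A n h I = Some (qs, o) ->
  (forall q, In q qs -> ask O q I' = ask O q I) ->
  run A n h I' = Some (qs, o).
Proof.
  revert h qs o; induction n as [|n IH]; intros h qs o Hrun Hagree; simpl in *.
  - discriminate.
  - destruct (A h) as [q|o']; [|exact Hrun].
    destruct (run A n (h ++ [ask O q I]) I) as [[qs1 o1]|] eqn:Hrest;
      [|discriminate].
    injection Hrun as <- <-.
    rewrite (Hagree q (or_introl eq_refl)).
    rewrite (IH _ _ _ Hrest); [reflexivity|].
    intros q' Hq'; apply Hagree; right; exact Hq'.
Qed.

Lemma run_deterministic {I : Inst} {n m h r r'} :
  run A n h I = Some r -> run A m h I = Some r' -> r = r'.
Proof.
  revert m h r r'; induction n as [|n IH]; intros m h r r' Hn Hm;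
    [discriminate|].
  destruct m as [|m]; [discriminate|]; simpl in *.
  destruct (A h) as [q|o].
  - destruct (run A n (h ++ [ask O q I]) I) as [[qs1 o1]|] eqn:Hrest1;
      [|discriminate].
    destruct (run A m (h ++ [ask O q I]) I) as [[qs2 o2]|] eqn:Hrest2;
      [|discriminate].
    injection (IH _ _ _ _ Hrest1 Hrest2) as <- <-.
    congruence.
  - congruence.
Qed.

Lemma halts_with_functional {I : Inst} {qs o qs' o'} :
  halts_with A I qs o -> halts_with A I qs' o' -> qs = qs' /\ o = o'.
Proof.
  intros [n Hn] [m Hm].
  injection (run_deterministic Hn Hm) as <- <-; split; reflexivity.
Qed.

Lemma halts_with_V {I I' : Inst} {qs o} :
  halts_with A I qs o -> V I (queries_posed A I) I' -> halts_with A I' qs o.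
Proof.
  intros [n Hn] HV; exists n.
  apply (run_agree Hn); intros q Hq.
  apply HV; exists qs, o; split; [exists n; exact Hn | exact Hq].
Qed.

End Runs.

Theorem mainTheorem1 (Inst G : Type) (P : problem_class Inst G) (O : oracle Inst)
    (eps : R) (A : algorithm O G) :
  0 <= eps ->
  eps_approx_algorithm P eps A ->
  forall I : Inst,
    exists x : outcome G,
      forall I' : Inst, V I (queries_posed A I) I' -> S P I' eps x.
Proof.
  intros _ HA I.
  destruct (HA I) as [qs [o [Hhalt _]]].
  exists o; intros I' HV.
  destruct (HA I') as [qs' [o' [Hhalt' HS]]].
  destruct (halts_with_functional (halts_with_V Hhalt HV) Hhalt') as [_ <-].
  exact HS.
Qed.
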